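(* Let $\mathcal{D}\subseteq\{0,1\}^n$ be a nonempty down-monotone set and let $f:\{0,1\}^n\to\mathbb{R}$ be submodular on $\mathcal{D}$. If $f(0)>0$, then there are at least $\frac{1}{n+1}|\mathcal{D}|$ points $y\in\mathcal{D}$ with $f(y)\neq 0$.
   Context: $\mathcal{D}$ is down-monotone if $y\in\mathcal{D}$ and $x\le y$ (coordinatewise) imply $x\in\mathcal{D}$. $f$ is submodular on $\mathcal{D}$ (has non-increasing marginals on $\mathcal{D}$) if $f(x+\mathbf{e}_i)-f(x)\ge f(y+\mathbf{e}_i)-f(y)$ for all $i$ and all $x\le y$ with $x_i=y_i=0$ and $x+\mathbf{e}_i, y+\mathbf{e}_i\in\mathcal{D}$, where $\mathbf{e}_i$ is the $i$-th standard basis vector. *)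

From mathcomp Require Import all_boot all_order all_algebra.
From mathcomp Require Import reals.
Set Implicit Arguments. Unset Strict Implicit. Unset Printing Implicit Defensive.
Import Order.TTheory GRing.Theory Num.Theory.
Local Open Scope ring_scope.

Notation cube n := {ffun 'I_n -> bool}.

Definition cle (n : nat) (x y : cube n) : bool := [forall i, x i ==> y i].

(* x + e_i (meaningful when x_i = 0): set coordinate i to 1. *)
Definition addei (n : nat) (x : cube n) (i : 'I_n) : cube n :=
  [ffun j => if j == i then true else x j].

Definition zerov (n : nat) : cube n := [ffun => false].

Definition down_monotone (n : nat) (D : {set cube n}) : Prop :=
  forall x y : cube n, y \in D -> cle x y -> x \in D.

Definition submodular_on (R : numDomainType) (n : nat) (D : {set cube n})
  (f : cube n -> R) : Prop :=
  forall (i : 'I_n) (x y : cube n), cle x y -> x i = false -> y i = false ->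
    addei x i \in D -> addei y i \in D ->
    f (addei y i) - f y <= f (addei x i) - f x.

From mathcomp Require Import all_boot all_order all_algebra.
From mathcomp Require Import reals.
Import Order.TTheory GRing.Theory Num.Theory.
Local Open Scope ring_scope.
Set Implicit Arguments. Unset Strict Implicit.

(* If at some y in D every marginal f y - f (y - e_i) with y_i = 1 vanishes,
   submodularity makes every marginal below y in a direction of the support of
   y nonnegative, and building y from 0 one coordinate at a time gives
   f 0 <= f y. Hence when f 0 > 0, every zero y of f in D has the form x + e_i
   with f x <> 0 and x in D, so #|D| - #|N| <= n #|N| for N the non-zeros. *)

Definition subei (n : nat) (x : cube n) (i : 'I_n) : cube n :=
  [ffun j => if j == i then false else x j].

Definition trunc (n : nat) (y : cube n) (k : nat) : cube n :=
  [ffun j : 'I_n => (j < k)%N && y j].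

Section Cube.
Variable n : nat.
Implicit Types (x y : cube n) (i : 'I_n).

Lemma addei_subei y i : y i -> addei (subei y i) i = y.
Proof.
move=> yi; apply/ffunP=> j; rewrite !ffunE.
by case: eqP => [->|_]; rewrite ?ffunE ?yi //; case: eqP.
Qed.

Lemma cle_subei y i : cle (subei y i) y.
Proof. by apply/forallP=> j; rewrite ffunE; case: eqP => //= _; apply/implyP. Qed.

Lemma cle_addei x y i : cle x y -> y i -> cle (addei x i) y.
Proof.
move=> /forallP xy yi; apply/forallP=> j; rewrite ffunE.
by case: eqP => [->|_]; [rewrite yi | exact: xy].
Qed.

Lemma cle_subeiR x y i : cle x y -> x i = false -> cle x (subei y i).
Proof.
move=> /forallP xy xi; apply/forallP=> j; rewrite ffunE.
by case: eqP => [->|_]; [rewrite xi | exact: xy].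
Qed.

Lemma trunc0 y : trunc y 0 = zerov n.
Proof. by apply/ffunP=> j; rewrite !ffunE. Qed.

Lemma trunc_n y : trunc y n = y.
Proof. by apply/ffunP=> j; rewrite ffunE ltn_ord. Qed.

Lemma cle_trunc y k : cle (trunc y k) y.
Proof. by apply/forallP=> j; rewrite ffunE; apply/implyP=> /andP[]. Qed.

Lemma trunc_ord y i : trunc y i i = false.
Proof. by rewrite ffunE ltnn. Qed.

Lemma truncS y i :
  trunc y i.+1 = if y i then addei (trunc y i) i else trunc y i.
Proof.
apply/ffunP=> j; case yi: (y i); rewrite !ffunE ltnS leq_eqVlt.
all: case: (eqVneq j i) => [->|/negbTE nji]; rewrite ?eqxx ?ltnn ?yi ?andbF //.
all: by rewrite val_eqE nji.
Qed.

Lemma le_zerov_steps (R : numDomainType) (f : cube n -> R) y :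
  (forall x i, cle x y -> x i = false -> y i -> f x <= f (addei x i)) ->
  f (zerov n) <= f y.
Proof.
move=> steps; rewrite -(trunc_n y) -(trunc0 y).
suff: forall k, (k <= n)%N -> f (trunc y 0) <= f (trunc y k) by apply.
elim=> [//|k IH kn]; apply: le_trans (IH (ltnW kn)) _.
rewrite -[k]/(val (Ordinal kn)) truncS.
by case: ifP => [yk|//]; apply: steps; rewrite ?cle_trunc ?trunc_ord.
Qed.

End Cube.

Section Submodular.
Variables (R : numDomainType) (n : nat) (D : {set cube n}) (f : cube n -> R).
Hypotheses (downD : down_monotone D) (submod_f : submodular_on D f).

Lemma marginal_ge0 y i x : y \in D -> y i -> f (subei y i) = f y ->
  cle x y -> x i = false -> f x <= f (addei x i).
Proof.
move=> yD yi flat xy xi; rewrite -subr_ge0.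
have := submod_f (cle_subeiR xy xi) xi; rewrite addei_subei // flat subrr.
apply; rewrite ?ffunE ?eqxx //.
exact: downD yD (cle_addei xy yi).
Qed.

Lemma le_zerov_flat y : y \in D ->
  (forall i, y i -> f (subei y i) = f y) -> f (zerov n) <= f y.
Proof.
move=> yD flat; apply: le_zerov_steps => x i xy xi yi.
exact: marginal_ge0 yD yi (flat i yi) xy xi.
Qed.

Lemma exists_nonzero_subei y : 0 < f (zerov n) -> y \in D -> f y = 0 ->
  exists2 i, y i & f (subei y i) != 0.
Proof.
move=> f0 yD fy0; apply/exists_inP; apply: contraLR f0 => /exists_inPn flat.
suff: f (zerov n) <= 0 by move/le_gtF->.
rewrite -fy0 le_zerov_flat // => i yi.
by apply/eqP; rewrite fy0 -[_ == 0]negbK flat.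
Qed.

End Submodular.

Lemma card_le_cover n (D N : {set cube n}) :
  N \subset D -> D :\: N \subset [set addei p.2 p.1 | p in setX [set: 'I_n] N] ->
  (#|D| <= n.+1 * #|N|)%N.
Proof.
move=> ND cover; rewrite -(cardsID N D) (setIidPr ND) mulSn leq_add2l.
apply: leq_trans (subset_leq_card cover) _.
by rewrite (leq_trans (leq_imset_card _ _)) // cardsX cardsT card_ord.
Qed.

Theorem lemma8 (R : realType) (n : nat) (D : {set {ffun 'I_n -> bool}})
  (f : {ffun 'I_n -> bool} -> R) :
  D != set0 -> down_monotone D -> submodular_on D f -> 0 < f (zerov n) ->
  (#|D|%:R / (n.+1)%:R : R) <= #|[set y in D | f y != 0]|%:R.
Proof.
move=> _ downD submod_f f0; set N := [set y in D | f y != 0].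
rewrite ler_pdivrMr ?ltr0Sn // mulrC -natrM ler_nat.
apply: card_le_cover; first by apply/subsetP=> y; rewrite inE => /andP[].
apply/subsetP=> y; rewrite !inE negb_and negbK => /andP[/orP[/negP //|/eqP fy0] yD].
have [i yi fi] := exists_nonzero_subei downD submod_f f0 yD fy0.
apply/imsetP; exists (i, subei y i); last by rewrite addei_subei.
by rewrite !inE fi andbT (downD _ _ yD (cle_subei y i)).
Qed.
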